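(* For every closed subset $F\subset\mathrm{GL}_n(\mathbb{C})$, the set $\mathrm{sLog}(F)$ is closed in $\mathbb{R}^n/\mathcal{S}_n$.
   Context: $\mathcal{S}_n$ acts on $\mathbb{R}^n$ by permuting coordinates; $\mathbb{R}^n/\mathcal{S}_n$ carries the metric $d(x,y) = \min_{\sigma\in\mathcal{S}_n}|\sigma\cdot x - y|$. $\mathrm{sLog}:\mathrm{GL}_n(\mathbb{C})\to\mathbb{R}^n/\mathcal{S}_n$ sends $A$ to $(\ln\lambda_1,\dots,\ln\lambda_n)$ where $\lambda_1,\dots,\lambda_n$ are the singular values of $A$ (square roots of the eigenvalues of $AA^*$). Closedness of $F$ is with respect to the usual topology of $\mathrm{GL}_n(\mathbb{C})$. *)

From HB Require Import structures.
From mathcomp Require Import all_boot all_order all_algebra all_fingroup complex.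
From mathcomp Require Import all_classical all_reals all_analysis.
Unset Printing Implicit Defensive.
Import Order.TTheory GRing.Theory Num.Theory.
Import numFieldNormedType.Exports.
Local Open Scope ring_scope.
Local Open Scope classical_set_scope.

(* The complex numbers over the real field R, viewed as a numFieldType, so
   that MathComp-Analysis equips it (and its matrices) with the usual
   (Euclidean / product) topology. *)
Definition cplx (R : realType) : numClosedFieldType := R[i].

Definition GL (R : realType) (n : nat) : set 'M[cplx R]_n :=
  [set A | A \in unitmx].

Definition closed_in_GL (R : realType) (n : nat) (F : set 'M[cplx R]_n) :=
  F `<=` GL R n /\ exists G : set 'M[cplx R]_n, closed G /\ F = G `&` GL R n.

Definition adjoint (R : realType) (n : nat) (A : 'M[cplx R]_n) : 'M[cplx R]_n :=
  (map_mx Num.conj A)^T.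

Definition singular_values (R : realType) (n : nat) (A : 'M[cplx R]_n)
    (lam : 'rV[R]_n) : Prop :=
  (forall i, 0 < lam 0 i) /\
  char_poly (A *m @adjoint R n A) =
    \prod_(i < n) ('X - ((((lam 0 i) ^+ 2 : R)%:C)%C : cplx R)%:P).

Definition sLog_rep (R : realType) (n : nat) (A : 'M[cplx R]_n) (x : 'rV[R]_n) :=
  exists lam : 'rV[R]_n, @singular_values R n A lam /\ forall i, x 0 i = ln (lam 0 i).

(* Representatives (in R^n) of the points of sLog(F) in R^n/S_n. This set is
   S_n-invariant, so it is exactly the preimage of sLog(F) under the quotient
   map R^n -> R^n/S_n. *)
Definition sLog_set (R : realType) (n : nat) (F : set 'M[cplx R]_n) : set 'rV[R]_n :=
  [set x | exists2 A, F A & @sLog_rep R n A x].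

Definition eucl (R : realType) (n : nat) (x : 'rV[R]_n) : R :=
  Num.sqrt (\sum_(i < n) (x 0 i) ^+ 2).

Definition perm_act (R : realType) (n : nat) (s : 'S_n) (x : 'rV[R]_n) : 'rV[R]_n :=
  col_perm s x.

(* Quotient metric d([x],[y]) = min_{s in S_n} |s.x - y| on R^n/S_n,
   computed on representatives. *)
Definition qdist (R : realType) (n : nat) (x y : 'rV[R]_n) : R :=
  \big[Order.min/@eucl R n (x - y)]_(s : 'S_n) @eucl R n (@perm_act R n s x - y).

(* A subset of R^n/S_n, given by its (S_n-invariant) set S of representatives,
   is closed for the metric d: every point at d-distance 0 from it belongs
   to it. *)
Definition qclosed (R : realType) (n : nat) (S : set 'rV[R]_n) : Prop :=
  forall y : 'rV[R]_n,
    (forall e : R, 0 < e -> exists2 x, S x & @qdist R n x y < e) -> S y.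

From HB Require Import structures.
From mathcomp Require Import all_boot all_order all_algebra all_fingroup complex.
From mathcomp Require Import all_classical all_reals all_analysis.
From mathcomp Require Import lra.

(* If points x_k of sLog(F) approach y in R^n/S_n, permuting singular values gives matrices
   A_k in F whose log-singular values tend to y coordinatewise.  The squared Frobenius norm
   of A_k is the sum of its squared singular values, so the A_k stay in a compact box and
   cluster at some A in the closure of F in M_n(C).  The characteristic polynomial of A A^*
   depends continuously on A, hence equals prod_i (X - e^(2 y_i)); thus A A^* has nonzero
   determinant, A is invertible, so A lies in F and y = sLog A. *)

Set Implicit Arguments.
Unset Strict Implicit.
Unset Printing Implicit Defensive.
Import Order.TTheory GRing.Theory Num.Theory.
Import numFieldNormedType.Exports.
Local Open Scope ring_scope.
Local Open Scope classical_set_scope.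

Arguments adjoint {R n}.
Arguments singular_values {R n}.
Arguments sLog_set {R n}.
Arguments eucl {R n}.
Arguments perm_act {R n}.
Arguments qdist {R n}.

Section Limits.
Context {T : Type} {F : set_system T} {FF : Filter F}.

Lemma cvg_sumr {K : numFieldType} {I : Type} (r : seq I) (f : I -> T -> K) (l : I -> K) :
  (forall i, f i t @[t --> F] --> l i) ->
  \sum_(i <- r) f i t @[t --> F] --> \sum_(i <- r) l i.
Proof. by move=> fl; apply: (cvg_big add_continuous). Qed.

Lemma cvg_prodr {K : numFieldType} {I : Type} (r : seq I) (f : I -> T -> K) (l : I -> K) :
  (forall i, f i t @[t --> F] --> l i) ->
  \prod_(i <- r) f i t @[t --> F] --> \prod_(i <- r) l i.
Proof. by move=> fl; apply: (cvg_big mul_continuous). Qed.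

Lemma cvg_det {K : numFieldType} n (M : T -> 'M[K]_n) (L : 'M[K]_n) :
  (forall i j, M t i j @[t --> F] --> L i j) -> \det (M t) @[t --> F] --> \det L.
Proof.
move=> ML; apply: cvg_sumr => s; apply: cvgM; first exact: cvg_cst.
by apply: cvg_prodr => i; exact: ML.
Qed.

Lemma cvg_conj {C : numClosedFieldType} (f : T -> C) (l : C) :
  f t @[t --> F] --> l -> (f t)^* @[t --> F] --> l^*.
Proof.
move=> /cvgrPdist_lt fl; apply/cvgrPdist_lt => e e0.
by apply: filterS (fl e e0) => t; rewrite -rmorphB norm_conjC.
Qed.

Lemma cvg_real_complex {R : realType} (f : T -> R) (l : R) :
  f t @[t --> F] --> l -> ((f t)%:C : cplx R)%C @[t --> F] --> (l%:C : cplx R)%C.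
Proof.
move=> /cvgrPdist_lt fl; apply/cvgrPdist_lt => -[e e'].
rewrite ltcE /= => /andP[/eqP-> e0].
apply: filterS (fl e e0) => t; rewrite -rmorphB normc_def /= expr0n /= addr0.
by rewrite sqrtr_sqr ltcR.
Qed.

End Limits.

Section ComplexSquare.
Context {R : realType}.

Definition csquare (c : R) : set (cplx R) :=
  [set z : cplx R | `|complex.Re z| <= c /\ `|complex.Im z| <= c].

Lemma continuous_complex_of_rV2 :
  continuous (fun v : 'rV[R]_2 => (v 0 0 +i* v 0 1)%C : cplx R).
Proof.
move=> v; have -> : (fun v : 'rV[R]_2 => (v 0 0 +i* v 0 1)%C : cplx R) =
    (fun v => (v 0 0)%:C%C + 'i%C * (v 0 1)%:C%C).
  by apply/funext => w; rewrite [LHS]complexE.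
have coordC j : ((w : 'rV[R]_2) 0 j)%:C%C @[w --> v] --> ((v 0 j)%:C : cplx R)%C.
  exact: cvg_real_complex (@coord_continuous R 1 2 0 j v).
apply: (@cvgD _ _ _ (nbhs v)); first exact: coordC.
by apply: cvgM; [exact: cvg_cst | exact: coordC].
Qed.

Lemma csquare_compact c : compact (csquare c).
Proof.
have -> : csquare c = (fun v : 'rV[R]_2 => (v 0 0 +i* v 0 1)%C : cplx R) @`
    [set v : 'rV[R]_2 | forall i, `[-c, c]%classic (v ord0 i)].
  apply/seteqP; split => [z [Rez Imz]|_ [v v_c <-]].
    exists (\row_i if i == 0 then complex.Re z else complex.Im z).
      by move=> i; rewrite mxE /= in_itv /= -ler_norml; case: ifP.
    by rewrite !mxE; case: z {Rez Imz}.
  by split; rewrite /= ler_norml; [have := v_c 0 | have := v_c 1]; rewrite /= in_itv.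
apply: (continuous_compact (continuous_subspaceT continuous_complex_of_rV2)).
exact: (@rV_compact _ 2 (fun=> `[-c, c]%classic) (fun=> @segment_compact R (-c) c)).
Qed.

Lemma csquare_norm c (z : cplx R) : 1 <= c -> `|z| ^+ 2 <= c%:C%C -> csquare c z.
Proof.
move=> c_ge1; rewrite -add_Re2_Im2 lecR => zc.
have Re2 := sqr_ge0 (complex.Re z); have Im2 := sqr_ge0 (complex.Im z).
by split; rewrite ler_norml; apply/andP; split; nra.
Qed.

End ComplexSquare.

Section MatrixBox.
Variable T : ptopologicalType.

Lemma mxvec_index_inj m n (i i' : 'I_m) (j j' : 'I_n) :
  mxvec_index i j = mxvec_index i' j' -> i = i' /\ j = j'.
Proof. by rewrite /mxvec_index => /cast_ord_inj/enum_rank_inj [-> ->]. Qed.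

Lemma continuous_vec_mx m n : continuous (@vec_mx T m n).
Proof.
move=> v B [P P_nbhs PB].
exists (fun i k => [set t | forall i' j', mxvec_index i' j' = k -> P i' j' t]).
  move=> i; rewrite (ord1 i); case/mxvec_indexP => i0 j0.
  have := P_nbhs i0 j0; rewrite mxE => P0.
  by apply: filterS P0 => t Pt i' j' /mxvec_index_inj [-> ->].
by move=> w Pw; apply: PB => i j /=; rewrite mxE; exact: Pw.
Qed.

Lemma mx_box_compact m n (A : 'I_m -> 'I_n -> set T) :
  (forall i j, compact (A i j)) ->
  compact [set M : 'M[T]_(m, n) | forall i j, A i j (M i j)].
Proof.
move=> A_compact.
pose B k := [set t : T | forall i j, mxvec_index i j = k -> A i j t].
have B_compact k : compact (B k).
  case/mxvec_indexP: k => i j; suff -> : B (mxvec_index i j) = A i j by [].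
  apply/seteqP; split => [t|t At i' j' /mxvec_index_inj [-> ->] //]; exact.
have := continuous_compact (continuous_subspaceT (@continuous_vec_mx m n))
  (rV_compact B_compact).
congr compact; apply/seteqP; split => [_ [v Bv <-] i j|M BM].
  by rewrite mxE; exact: Bv.
exists (mxvec M); last exact: mxvecK.
by case/mxvec_indexP => i j i' j' /mxvec_index_inj [<- <-]; rewrite mxvecE.
Qed.

End MatrixBox.

Lemma horner_char_poly (K : comNzRingType) n (M : 'M[K]_n) z :
  (char_poly M).[z] = \det (z%:M - M).
Proof.
rewrite /char_poly -horner_evalE -det_map_mx; congr (\det _); apply/matrixP => i j.
by rewrite !mxE /= horner_evalE !hornerE hornerMn hornerX.
Qed.

Lemma poly_eq_horner (K : numDomainType) (p q : {poly K}) :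
  (forall z, p.[z] = q.[z]) -> p = q.
Proof.
move=> pq; apply/eqP; rewrite -subr_eq0; apply/negPn/negP => pq_neq0.
suff : (size [seq i%:R : K | i <- iota 0 (size (p - q)%R)] < size (p - q)%R)%N.
  by rewrite size_map size_iota ltnn.
apply: max_poly_roots pq_neq0 _ _.
- by apply/allP => z _; rewrite /root !hornerE pq subrr.
- by rewrite map_inj_uniq ?iota_uniq // => a b /eqP; rewrite eqr_nat => /eqP.
Qed.

Lemma cluster_cvg_eq {I : Type} {T U : topologicalType} (F : set_system I)
    (u : I -> T) (A : T) (g : T -> U) (L : U) :
  hausdorff_space U -> cluster (u @ F) A -> {for A, continuous g} ->
  g (u k) @[k --> F] --> L -> g A = L.
Proof.
move=> hU clA gA guL; apply: hU => P Q gAP LQ.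
have [M [QM PM]] := clA (g @^-1` Q) (g @^-1` P) (guL _ LQ) (gA _ gAP).
by exists (g M).
Qed.

Section SingularValues.
Variable R : realType.

Lemma singular_values_perm n (A : 'M[cplx R]_n) lam (s : 'S_n) :
  singular_values A lam -> singular_values A (col_perm s lam).
Proof.
move=> [lam_gt0 char_gram]; split => [i|]; first by rewrite mxE.
rewrite char_gram (reindex_inj (@perm_inj _ s)) /=.
by apply: eq_bigr => i _; rewrite mxE.
Qed.

Lemma mxtrace_gram n (A : 'M[cplx R]_n) :
  \tr (A *m adjoint A) = \sum_i \sum_j `|A i j| ^+ 2.
Proof.
by apply: eq_bigr => i _; rewrite mxE; apply: eq_bigr => j _; rewrite !mxE normCK.
Qed.

Lemma singular_values_sum_sqr n (A : 'M[cplx R]_n) lam : singular_values A lam ->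
  \sum_i \sum_j `|A i j| ^+ 2 = (\sum_i lam 0 i ^+ 2)%:C%C.
Proof.
case: n A lam => [|n] A lam [_ char_gram]; first by rewrite !big_ord0.
pose c i : cplx R := (lam 0 i ^+ 2)%:C%C.
have size_c : size (map c (index_enum 'I_n.+1)) = n.+1.
  by rewrite size_map -[index_enum _]enumT size_enum_ord.
have := @coefPn_prod_XsubC _ (map c (index_enum 'I_n.+1)).
rewrite size_c !big_map -char_gram char_poly_trace // => /(_ isT)/oppr_inj tr_gram.
by rewrite -mxtrace_gram tr_gram rmorph_sum.
Qed.

Lemma singular_values_entry_le n (A : 'M[cplx R]_n) lam i j : singular_values A lam ->
  `|A i j| ^+ 2 <= (\sum_k lam 0 k ^+ 2)%:C%C.
Proof.
move=> /singular_values_sum_sqr <-; rewrite (bigD1 i) //= (bigD1 j) //= -addrA lerDl.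
apply: addr_ge0; apply: sumr_ge0 => k _; last apply: sumr_ge0 => l _; exact: exprn_ge0.
Qed.

Lemma singular_values_unitmx n (A : 'M[cplx R]_n) lam :
  singular_values A lam -> A \in unitmx.
Proof.
move=> [lam_gt0 char_gram]; rewrite unitmxE unitfE; apply/eqP => detA0.
have := char_poly_det (A *m adjoint A).
rewrite -horner_coef0 char_gram horner_prod det_mulmx detA0 mul0r mulr0.
move=> /eqP/prodf_eq0 [i _]; rewrite hornerXsubC sub0r oppr_eq0 fmorph_eq0 sqrf_eq0.
by rewrite gt_eqF.
Qed.

Lemma continuous_horner_char_gram n (z : cplx R) :
  continuous (fun M : 'M[cplx R]_n => (char_poly (M *m adjoint M)).[z]).
Proof.
have -> : (fun M : 'M[cplx R]_n => (char_poly (M *m adjoint M)).[z]) =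
    (fun M => \det (z%:M - M *m adjoint M)).
  by apply/funext => M; exact: horner_char_poly.
move=> M; apply: (@cvg_det _ (nbhs M)) => i j.
under eq_cvg do rewrite !mxE; rewrite !mxE.
apply: cvgB; first exact: cvg_cst.
apply: cvg_sumr => k; apply: cvgM; first exact: coord_continuous.
rewrite /adjoint; under eq_cvg do rewrite !mxE; rewrite !mxE.
exact/cvg_conj/coord_continuous.
Qed.

Lemma singular_values_cluster n {I : Type} {F : set_system I} {FF : Filter F}
    (u : I -> 'M[cplx R]_n) (lam : I -> 'rV[R]_n) (l : 'rV[R]_n) (A : 'M[cplx R]_n) :
  (forall k, singular_values (u k) (lam k)) ->
  (forall i, lam k 0 i @[k --> F] --> l 0 i) -> (forall i, 0 < l 0 i) ->
  cluster (u @ F) A -> singular_values A l.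
Proof.
move=> svu cvg_lam l_gt0 clA; split => //; apply: poly_eq_horner => z.
apply: (@cluster_cvg_eq _ _ _ F u A (fun M => (char_poly (M *m adjoint M)).[z]) _ _ clA);
  [exact: norm_hausdorff | exact: continuous_horner_char_gram |].
under eq_cvg do rewrite (proj2 (svu _)) horner_prod.
rewrite horner_prod; apply: cvg_prodr => i.
under eq_cvg do rewrite hornerXsubC; rewrite hornerXsubC.
apply: cvgB; first exact: cvg_cst.
by apply: cvg_real_complex; apply: cvgM; exact: cvg_lam.
Qed.

Lemma singular_values_near_bounded n {I : Type} {F : set_system I} {FF : Filter F}
    (u : I -> 'M[cplx R]_n) (lam : I -> 'rV[R]_n) (l : 'rV[R]_n) :
  (forall k, singular_values (u k) (lam k)) ->
  (forall i, lam k 0 i @[k --> F] --> l 0 i) ->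
  exists c, \forall k \near F, forall i j, csquare c (u k i j).
Proof.
move=> svu cvg_lam; pose S := \sum_i l 0 i ^+ 2.
have S_ge0 : 0 <= S by apply: sumr_ge0 => i _; exact: sqr_ge0.
have cvg_S : \sum_i lam k 0 i ^+ 2 @[k --> F] --> S.
  by apply: cvg_sumr => i; apply: cvgM; exact: cvg_lam.
exists (S + 1); near=> k => i j; apply: csquare_norm; first by rewrite lerDr.
apply: le_trans (singular_values_entry_le i j (svu k)) _; rewrite lecR ltW //.
by near: k; apply: cvgr_lt cvg_S _ _; rewrite ltrDl.
Unshelve. all: by end_near.
Qed.

End SingularValues.

Section SLog.
Variables (R : realType) (n : nat).

Lemma qdist_lt_perm (x y : 'rV[R]_n) e :
  qdist x y < e -> exists s : 'S_n, eucl (perm_act s x - y) < e.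
Proof.
rewrite /qdist; elim/big_ind: _ => [xy|a b IHa IHb|s _ xy].
- by exists 1%g; rewrite /perm_act col_perm1.
- by rewrite gt_min => /orP[/IHa|/IHb].
- by exists s.
Qed.

Lemma normr_coord_le_eucl (v : 'rV[R]_n) i : `|v 0 i| <= eucl v.
Proof.
rewrite /eucl -sqrtr_sqr ler_sqrt; last by apply: sumr_ge0 => j _; exact: sqr_ge0.
by rewrite (bigD1 i) //= lerDl; apply: sumr_ge0 => j _; exact: sqr_ge0.
Qed.

Lemma sLog_set_qdist_lt (F : set 'M[cplx R]_n) (x y : 'rV[R]_n) e :
  sLog_set F x -> qdist x y < e ->
  exists A lam, [/\ F A, singular_values A lam & forall i, `|ln (lam 0 i) - y 0 i| < e].
Proof.
move=> [A FA [lam [svA x_ln]]] /qdist_lt_perm [s xy].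
exists A, (col_perm s lam); split => // [|i]; first exact: singular_values_perm.
apply: le_lt_trans xy; have := normr_coord_le_eucl (perm_act s x - y) i.
by rewrite /perm_act !mxE x_ln.
Qed.

Lemma sLog_set_cvg (F : set 'M[cplx R]_n) (y : 'rV[R]_n) :
  (forall e : R, 0 < e -> exists2 x, sLog_set F x & qdist x y < e) ->
  exists (u : nat -> 'M[cplx R]_n) (lam : nat -> 'rV[R]_n),
    [/\ forall k, F (u k), forall k, singular_values (u k) (lam k) &
        forall i, lam k 0 i @[k --> \oo] --> expR (y 0 i)].
Proof.
move=> y_adh.
have approx k : exists Alam : 'M[cplx R]_n * 'rV[R]_n,
    [/\ F Alam.1, singular_values Alam.1 Alam.2 &
        forall i, `|ln (Alam.2 0 i) - y 0 i| < k.+1%:R^-1].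
  have k_gt0 : 0 < k.+1%:R^-1 :> R by rewrite invr_gt0 ltr0Sn.
  have [x Fx xy] := y_adh _ k_gt0.
  by have [A [lam [FA svA lam_y]]] := sLog_set_qdist_lt Fx xy; exists (A, lam).
have [f fP] := choice approx.
exists (fst \o f), (snd \o f); split => [k|k|i]; try by have [] := fP k.
have cvg_ln : ln ((f k).2 0 i) @[k --> \oo] --> y 0 i.
  apply/cvgrPdist_lt => e e0.
  apply: filterS (near_infty_natSinv_lt (PosNum e0)) => k /= k_e.
  by have [_ _ lam_y] := fP k; rewrite distrC; exact: lt_trans (lam_y i) k_e.
have -> : (fun k => (snd \o f) k 0 i) = expR \o (fun k => ln ((f k).2 0 i)).
  by apply/funext => k /=; have [_ [lam_gt0 _] _] := fP k; rewrite lnK ?posrE.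
by apply: cvg_comp cvg_ln _; exact: continuous_expR.
Qed.

End SLog.

Theorem mainTheorem4 (R : realType) (n : nat) (F : set 'M[cplx R]_n) :
  @closed_in_GL R n F -> @qclosed R n (@sLog_set R n F).
Proof.
move=> [_ [G [closedG ->]]] y /sLog_set_cvg [u [lam [Fu svu cvg_lam]]].
pose l := \row_i expR (y 0 i).
have cvg_l i : lam k 0 i @[k --> \oo] --> l 0 i by rewrite mxE; exact: cvg_lam.
have l_gt0 i : 0 < l 0 i by rewrite mxE expR_gt0.
have [c u_bounded] := singular_values_near_bounded svu cvg_l.
have [A [[_ GA] clA]] :
    exists A, ([set M : 'M[cplx R]_n | forall i j, csquare c (M i j)] `&` G
               `&` cluster (u @ \oo)) A.
  have K_compact := compact_closedI (mx_box_compact (fun _ _ => @csquare_compact R c)) closedG.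
  apply: K_compact.
  by apply: filterS u_bounded => k u_c; split => //; case: (Fu k).
have svA : singular_values A l by exact: singular_values_cluster svu cvg_l l_gt0 clA.
exists A; first by split => //; exact: singular_values_unitmx svA.
by exists l; split => // i; rewrite mxE expRK.
Qed.
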